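(* Let $\mathbf m\in\mathcal M$, $z_0\in\mathbb C\setminus\operatorname{supp}\mathbf m$ with $u:=G_{\mathbf m}(z_0)\ne0$, and $c\in\mathbb R$. Then the set $\{z\in\mathbb C\setminus\operatorname{supp}\mathbf m:\operatorname{Re}\mathcal S_u(z)>c\}$ has exactly one unbounded connected component, and likewise $\{z\in\mathbb C\setminus\operatorname{supp}\mathbf m:\operatorname{Re}\mathcal S_u(z)<c\}$ has exactly one unbounded connected component.
   Context: $\mathcal M$ is the set of compactly supported Borel probability measures on $\mathbb R$; $G_{\mathbf m}(z)=\int\frac{d\mathbf m(x)}{z-x}$. For $u\ne0$, $\operatorname{Re}\mathcal S_u(z)=\operatorname{Re}(zu)-\int\log|z-x|\,d\mathbf m(x)-\log|u|$ (the real part of $\mathcal S_u(z)=zu-\int\log(z-x)d\mathbf m(x)-\log u$). *)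

From mathcomp Require Import all_boot all_order all_algebra.
From mathcomp Require Import complex.
From mathcomp Require Import all_classical all_reals all_analysis.
Import numFieldNormedType.Exports.
Import Order.TTheory GRing.Theory Num.Theory.
Local Open Scope classical_set_scope.
Local Open Scope ring_scope.

Set Implicit Arguments.
Unset Strict Implicit.
Unset Printing Implicit Defensive.

(* The complex plane, as a topological space, is R * R (product topology);
   a point z = (z.1, z.2) stands for z.1 + i z.2. *)
Definition plane (R : realType) := (R * R)%type.

Definition cpx (R : realType) (z : plane R) : R[i] := (z.1 +i* z.2)%C.

Definition rcpx (R : realType) (x : R) : R[i] := (x +i* 0)%C.

Definition cmod (R : realType) (w : R[i]) : R :=
  Num.sqrt (complex.Re w ^+ 2 + complex.Im w ^+ 2).

Definition supp (R : realType) (m : probability R R) : set R :=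
  [set x | forall U : set R, open U -> U x -> (0 < m U)%E].

Definition compactly_supported (R : realType) (m : probability R R) : Prop :=
  compact (supp m).

Definition off_supp (R : realType) (m : probability R R) : set (plane R) :=
  [set z | ~ (z.2 = 0 /\ supp m z.1)].

Definition cauchy_transform (R : realType) (m : probability R R) (z : plane R)
  : R[i] :=
  (Rintegral m setT (fun x => complex.Re ((cpx z - rcpx x)^-1))
   +i* Rintegral m setT (fun x => complex.Im ((cpx z - rcpx x)^-1)))%C.

Definition ReS (R : realType) (m : probability R R) (u : R[i]) (z : plane R)
  : R :=
  complex.Re (cpx z * u)
  - Rintegral m setT (fun x => ln (cmod (cpx z - rcpx x)))
  - ln (cmod u).

Definition pnorm (R : realType) (z : plane R) : R := cmod (cpx z).

Definition unbounded (R : realType) (A : set (plane R)) : Prop :=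
  ~ (exists M : R, forall z, A z -> pnorm z <= M).

Definition unique_unbounded_component (R : realType) (A : set (plane R))
  : Prop :=
  exists z, A z /\ unbounded (connected_component A z) /\
    forall w, A w -> unbounded (connected_component A w) ->
      connected_component A w = connected_component A z.

From mathcomp Require Import all_boot all_order all_algebra.
From mathcomp Require Import complex.
From mathcomp Require Import all_classical all_reals all_analysis.
From mathcomp Require Import ring lra measurable_realfun.
Import numFieldNormedType.Exports.
Import Order.TTheory GRing.Theory Num.Theory.
Local Open Scope classical_set_scope.
Local Open Scope ring_scope.
Set Implicit Arguments.
Unset Strict Implicit.
Unset Printing Implicit Defensive.

(* Identify C with R^2, write u = p - i q and v := (p, q), a := |v| = |u| > 0.
   Then Re S_u(z) = <z, v> - L(z) - log a, where L(z) = \int log |z - x| dm(x)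
   is the logarithmic potential of m.  As m lives on some [-K, K]:
   (1) log (|z| / 2) <= L(z) <= log (2 |z|)    when |z| >= 2K,
   (2) L(w) - L(z) <= 2 |w - z| / |z|          when |z|, |w| >= 2K.
   By (1), Re S_u -> +oo along the ray r v and -> -oo along the ray - r v
   (r -> +oo); far enough out, these rays lie in the super- resp. sub-level
   set and give an unbounded connected piece of it.  Conversely, a far point z
   of the super-level set has <z, v> >= 0, Re S_u increases along z + t v by
   (2), and once <z + t v, v> is large the segment from z + t v to its
   orthogonal projection on R v stays in the set by (1) and ends on the ray.
   The sub-level set is treated in the same way with - v. *)

Section EuclideanPlane.
Variable R : realType.
Implicit Types (p z w : plane R) (s t : R).

Definition dotp z w : R := z.1 * w.1 + z.2 * w.2.

Lemma dotpDl z w x : dotp (z + w) x = dotp z x + dotp w x.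
Proof. rewrite /dotp /=; ring. Qed.

Lemma dotpZl t z w : dotp (t *: z) w = t * dotp z w.
Proof. rewrite /dotp /= -![t *: _]/(t * _); ring. Qed.

Lemma pnorm_ge0 z : 0 <= pnorm z.
Proof. exact: sqrtr_ge0. Qed.

Lemma pnorm_sqr z : pnorm z ^+ 2 = z.1 ^+ 2 + z.2 ^+ 2.
Proof. by rewrite /pnorm /cmod /= sqr_sqrtr // addr_ge0 // sqr_ge0. Qed.

Lemma dotp_self z : dotp z z = pnorm z ^+ 2.
Proof. by rewrite pnorm_sqr /dotp !expr2. Qed.

Lemma pnorm_le z s : 0 <= s -> z.1 ^+ 2 + z.2 ^+ 2 <= s ^+ 2 -> pnorm z <= s.
Proof.
move=> s0 h; rewrite -(ler_pXn2r (n := 2)) ?nnegrE ?pnorm_ge0 //.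
by rewrite pnorm_sqr.
Qed.

Lemma pnorm_ge z s : s ^+ 2 <= z.1 ^+ 2 + z.2 ^+ 2 -> s <= pnorm z.
Proof.
have n0 := pnorm_ge0 z; case: (lerP s 0) => [s0 _|s0]; first exact: le_trans n0.
move=> h; rewrite -(ler_pXn2r (n := 2)) ?nnegrE ?(ltW s0) //.
by rewrite pnorm_sqr.
Qed.

Lemma pnormZ t z : pnorm (t *: z) = `|t| * pnorm z.
Proof.
by rewrite /pnorm /cmod /= !exprMn -mulrDr sqrtrM ?sqr_ge0 // sqrtr_sqr.
Qed.

Lemma pnormN z : pnorm (- z) = pnorm z.
Proof. by rewrite -scaleN1r pnormZ normrN1 mul1r. Qed.

Lemma pnorm_gt0 z : z != 0 -> 0 < pnorm z.
Proof.
move=> z0; rewrite lt_def pnorm_ge0 andbT; apply: contra z0 => /eqP h.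
have : z.1 ^+ 2 + z.2 ^+ 2 == 0 by rewrite -pnorm_sqr h expr0n.
rewrite paddr_eq0 ?sqr_ge0 // !sqrf_eq0 => /andP[/eqP h1 /eqP h2].
by apply/eqP; case: z h1 h2 {h} => /= ? ? -> ->.
Qed.

Lemma pnorm_real (x : R) : pnorm (x, 0) = `|x|.
Proof. by rewrite /pnorm /cmod /= expr0n addr0 sqrtr_sqr. Qed.

Lemma dotp_le z w : dotp z w <= pnorm z * pnorm w.
Proof.
have n1 := pnorm_ge0 z; have n2 := pnorm_ge0 w.
case: (lerP (dotp z w) 0) => h; first by apply: le_trans h _; exact: mulr_ge0.
rewrite -(ler_pXn2r (n := 2)) ?nnegrE ?(ltW h) ?mulr_ge0 //.
rewrite exprMn !pnorm_sqr /dotp; have := sqr_ge0 (z.1 * w.2 - z.2 * w.1); nra.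
Qed.

Lemma norm_dotp_le z w : `|dotp z w| <= pnorm z * pnorm w.
Proof.
rewrite ler_norml dotp_le andbT; have := dotp_le (- z) w.
by rewrite pnormN /dotp /=; lra.
Qed.

Lemma pnormD z w : pnorm (z + w) <= pnorm z + pnorm w.
Proof.
apply: pnorm_le; first by rewrite addr_ge0 ?pnorm_ge0.
have := dotp_le z w; have := pnorm_sqr z; have := pnorm_sqr w.
rewrite /dotp /=; nra.
Qed.

Lemma pnorm_shift_sqr z w t :
  pnorm (z + t *: w) ^+ 2 =
    pnorm z ^+ 2 + 2 * t * dotp z w + t ^+ 2 * pnorm w ^+ 2.
Proof. rewrite !pnorm_sqr /dotp /= -![t *: _]/(t * _); ring. Qed.

Lemma pnorm_advance z w t : 0 <= dotp z w -> 0 <= t ->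
  pnorm z <= pnorm (z + t *: w).
Proof.
move=> d0 t0; apply: pnorm_ge; rewrite -!pnorm_sqr pnorm_shift_sqr.
have : 0 <= t * dotp z w by exact: mulr_ge0.
have := sqr_ge0 t; have := sqr_ge0 (pnorm w); nra.
Qed.

Lemma pnorm_retreat z w t : 2 * dotp z w <= pnorm w * pnorm z -> 0 <= t ->
  pnorm z / 2 <= pnorm (z - t *: w).
Proof.
move=> hd t0; apply: pnorm_ge; rewrite -!pnorm_sqr -scaleNr pnorm_shift_sqr.
have := sqr_ge0 (t * pnorm w - pnorm z / 2).
have : 0 <= t * (pnorm w * pnorm z - 2 * dotp z w).
  by rewrite mulr_ge0 // subr_ge0.
nra.
Qed.

Definition proj w p : plane R := (dotp p w / pnorm w ^+ 2) *: w.

Lemma proj_segment w p s : w != 0 -> 0 <= s <= 1 ->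
  dotp (p + s *: (proj w p - p)) w = dotp p w /\
  pnorm (p + s *: (proj w p - p)) <= pnorm p.
Proof.
move=> w0 /andP[s0 s1]; have wp := pnorm_gt0 w0.
have w2 : pnorm w ^+ 2 != 0 by rewrite expf_neq0 // gt_eqF.
set d := dotp p w; set q := p + _.
have q_convex : q = (1 - s) *: p + s *: proj w p.
  by rewrite /q scalerBr scalerBl scale1r addrA addrAC.
split; first by rewrite q_convex dotpDl !dotpZl dotp_self mulfVK // /d; ring.
have hproj : pnorm (proj w p) <= pnorm p.
  rewrite /proj pnormZ normrM normfV normrX (ger0_norm (pnorm_ge0 w)).
  rewrite expr2 invfM mulrA mulfVK ?gt_eqF //.
  by rewrite ler_pdivrMr //; exact: norm_dotp_le.
rewrite q_convex; apply: le_trans (pnormD _ _) _.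
rewrite [pnorm ((1 - s) *: _)]pnormZ [pnorm (s *: _)]pnormZ (ger0_norm s0).
rewrite ger0_norm ?subr_ge0 //; have := ler_wpM2l s0 hproj; lra.
Qed.

End EuclideanPlane.

Section LogInequalities.
Variable R : realType.

Lemma ln_le_subr1 (x : R) : 0 < x -> ln x <= x - 1.
Proof.
move=> x0; have := @le_ln1Dx R (x - 1); rewrite addrCA subrr addr0.
by apply; lra.
Qed.

Lemma ln_le_tangent (y b : R) : 0 < y -> 0 < b -> ln y <= b * y - ln b.
Proof.
move=> y0 b0; have := ln_le_subr1 (mulr_gt0 b0 y0).
by rewrite lnM ?posrE //; lra.
Qed.

Lemma ln_sub_le (y y' : R) : 0 < y -> 0 < y' -> ln y' - ln y <= (y' - y) / y.
Proof.
move=> y0 y'0; rewrite -lnV ?posrE // -lnM ?posrE ?invr_gt0 //.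
by rewrite mulrBl divff ?gt_eqF //; apply: ln_le_subr1; rewrite divr_gt0.
Qed.

End LogInequalities.

Section ConcentratedProbability.
Variables (R : realType) (m : probability R R) (K : R).
Hypothesis concentrated : m (~` [set` `[-K, K]]) = 0%E.
Let I := [set` `[-K, K]] : set R.
Let measurableI : measurable I. Proof. exact: measurable_itv. Qed.

Lemma probability_interval : m I = 1%E.
Proof.
have := probability_setC m measurableI; rewrite concentrated.
by case: (m I) => [r||] //= [] h; congr EFin; lra.
Qed.

Let bounded_integrable (h : R -> R) M : measurable_fun setT h ->
  (forall x, I x -> `|h x| <= M) -> m.-integrable I (EFin \o h).
Proof.
move=> mh hM; apply: measurable_bounded_integrable => //.
- by apply: (le_lt_trans (probability_le1 m measurableI)); exact: ltry.
- exact: measurable_funS mh.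
exists M; split; first exact: num_real.
by move=> y My x Ix; apply: le_trans (hM x Ix) _; exact: ltW.
Qed.

(* Constant integrands (found by // in the proofs below). *)
Let cst_integrable (c : R) : m.-integrable I (EFin \o (fun _ => c)).
Proof. by apply: (bounded_integrable (M := `|c|)) => // x _; rewrite lexx. Qed.

Let Rintegral_restrict (h : R -> R) : measurable_fun setT h ->
  m.-integrable I (EFin \o h) -> Rintegral m setT h = Rintegral m I h.
Proof.
move=> mh hI; have mC : measurable (~` I) by exact: measurableC.
have eI : setT `\` ~` I = I by rewrite setDE setCK setTI.
have hT : m.-integrable setT (EFin \o h).
  by rewrite (negligible_integrable mC) ?eI //; exact/measurable_EFinP.
by rewrite /Rintegral (negligible_integral mC) ?eI.
Qed.

Let Rintegral_interval_cst (c : R) : Rintegral m I (fun _ => c) = c.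
Proof.
rewrite Rintegral_cst // -[X in c * fine X]/(m I).
by rewrite probability_interval /= mulr1.
Qed.

Lemma Rintegral_bounds (h : R -> R) lo hi : measurable_fun setT h ->
  (forall x, I x -> lo <= h x <= hi) -> lo <= Rintegral m setT h <= hi.
Proof.
move=> mh hb.
have hint : m.-integrable I (EFin \o h).
  apply: (bounded_integrable (M := `|lo| + `|hi|)) => // x Ix.
  have /andP[h1 h2] := hb x Ix; rewrite ler_norml.
  have := ler_norm hi; have := ler_norm (- lo); rewrite normrN.
  have := normr_ge0 lo; have := normr_ge0 hi; lra.
rewrite Rintegral_restrict //; apply/andP; split.
- rewrite -[X in X <= _]Rintegral_interval_cst; apply: le_Rintegral => //.
  by move=> x Ix; have /andP[] := hb x Ix.
- rewrite -[X in _ <= X]Rintegral_interval_cst; apply: le_Rintegral => //.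
  by move=> x Ix; have /andP[] := hb x Ix.
Qed.

Lemma Rintegral_sub_le (h1 h2 : R -> R) M1 M2 d :
  measurable_fun setT h1 -> measurable_fun setT h2 ->
  (forall x, I x -> `|h1 x| <= M1) -> (forall x, I x -> `|h2 x| <= M2) ->
  (forall x, I x -> h1 x - h2 x <= d) ->
  Rintegral m setT h1 - Rintegral m setT h2 <= d.
Proof.
move=> mh1 mh2 b1 b2 hd.
have i1 := bounded_integrable mh1 b1; have i2 := bounded_integrable mh2 b2.
rewrite !Rintegral_restrict // -RintegralB //.
rewrite -[X in _ <= X]Rintegral_interval_cst; apply: le_Rintegral => //.
rewrite (_ : EFin \o _ = (fun x => (EFin \o h1) x - (EFin \o h2) x)%E).
  exact: integrableB.
by apply/funext => x /=; rewrite EFinB.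
Qed.

End ConcentratedProbability.

(* A compact set avoiding the support is m-negligible: each of its points has
   an open null neighbourhood, and finitely many of them cover it. *)
Lemma compact_off_supp_negligible (R : realType) (m : probability R R)
    (C : set R) :
  compact C -> (forall y, C y -> ~ supp m y) -> m.-negligible C.
Proof.
move=> cC Cs.
have null_nbhs y : exists U : set R, C y -> [/\ open U, U y & m U = 0%E].
  case: (pselect (C y)) => Cy; last by exists set0.
  have /existsNP [U /not_implyP [oU /not_implyP [Uy nU]]] := Cs y Cy.
  exists U => _; split => //.
  by apply/eqP; rewrite eq_le measure_ge0 andbT leNgt; exact/negP.
have [F HF] := choice null_nbhs.
move: cC; rewrite compact_cover => /(_ R C F) [||D DC cov].
- by move=> i Ci; have [] := HF i Ci.
- by move=> y Cy; exists y => //; have [] := HF y Cy.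
apply: (negligibleS cov); rewrite /cover bigcup_fset big_seq.
elim/big_ind: _ => [|A B|i iD]; [exact: negligible_set0|exact: negligibleU|].
have [oF _ mF] := HF i (set_mem (DC i iD)).
by apply/negligibleP => //; exact: open_measurable.
Qed.

Lemma compactly_supported_bound (R : realType) (m : probability R R) :
  compactly_supported m -> exists K : R,
    [/\ 1 <= K, (forall x, supp m x -> `|x| < K)
       & m (~` [set` `[-K, K]]) = 0%E].
Proof.
move=> /compact_bounded [M0 [_ HM]]; pose K := `|M0| + 2.
have K1 : 1 <= K by have := normr_ge0 M0; rewrite /K; lra.
have suppK x : supp m x -> `|x| < K.
  move=> sx; have hx : `|x| <= M0 + 1.
    by apply: (HM (M0 + 1)) => //; rewrite ltrDl.
  by have := ler_norm M0; rewrite /K; lra.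
exists K; split => //.
have mC : measurable (~` [set` `[-K, K]]).
  by apply: measurableC; exact: measurable_itv.
apply: (measure_negligible mC).
pose F n := [set` `[K, K + n%:R]] `|` [set` `[- (K + n%:R), - K]].
apply: (@negligibleS _ _ _ _ (\bigcup_n F n)).
  move=> x /=; rewrite in_itv /= => /negP; rewrite negb_and -!ltNge => hx.
  exists (Num.truncn (`|x| - K)).+1 => //.
  have := truncnS_gt (`|x| - K).
  have := ler_norm x; have := ler_norm (- x); rewrite normrN.
  rewrite /F /= !in_itv /=; case/orP: hx => h' *; [right|left]; apply/andP; lra.
apply: negligible_bigcup => n; apply: negligibleU;
  apply: compact_off_supp_negligible; try exact: segment_compact;
  move=> y /=; rewrite in_itv /= => /andP[h1 h2] /suppK;
  have := ler_norm y; have := ler_norm (- y); rewrite normrN; lra.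
Qed.

Section PathConnection.
Variable R : realType.
Implicit Types (A : set (plane R)) (p q w z : plane R).

Lemma segment_component A p q :
  (forall s, 0 <= s <= 1 -> A (p + s *: (q - p))) -> connected_component A p q.
Proof.
move=> hA; pose seg s := p + s *: (q - p).
have seg_cont : continuous seg.
  move=> s; apply: cvgD; first exact: cvg_cst.
  by apply: cvgZ; [exact: cvg_id | exact: cvg_cst].
have cB : connected (seg @` [set` `[0, 1]]).
  apply: connected_continuous_connected; first exact: segment_connected.
  exact: continuous_subspaceT.
apply: (connected_component_max _ _ cB).
- by exists 0; rewrite /= ?in_itv /= ?lexx ?ler01 // /seg scale0r addr0.
- by move=> _ [s /= hs <-]; apply: hA; rewrite in_itv /= in hs.
- by exists 1; rewrite /= ?in_itv /= ?lexx ?ler01 // /seg scale1r addrC subrK.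
Qed.

Lemma ray_component A w T r1 r2 : (forall r, T <= r -> A (r *: w)) ->
  T <= r1 -> T <= r2 -> connected_component A (r1 *: w) (r2 *: w).
Proof.
move=> ray h1 h2; apply: segment_component => s /andP[s0 s1].
rewrite -scalerBl scalerA -scalerDl; apply: ray.
have : 0 <= s * (r2 - T) by rewrite mulr_ge0 // subr_ge0.
have : 0 <= (1 - s) * (r1 - T) by rewrite mulr_ge0 // subr_ge0.
lra.
Qed.

Lemma unique_unbounded_of_ray A w T R0 : w != 0 ->
  (forall r, T <= r -> A (r *: w)) ->
  (forall z, A z -> R0 <= pnorm z -> connected_component A z (T *: w)) ->
  unique_unbounded_component A.
Proof.
move=> w0 ray far; have wp := pnorm_gt0 w0.
exists (T *: w); split; first exact: ray.
split.
  move=> [M HM]; pose r := `|T| + `|M| / pnorm w + 1.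
  have Mw : 0 <= `|M| / pnorm w by rewrite divr_ge0 // ltW.
  have Tr : T <= r by have := ler_norm T; rewrite /r; lra.
  have := HM _ (ray_component ray (lexx T) Tr).
  rewrite pnormZ ger0_norm; last by have := normr_ge0 T; rewrite /r; lra.
  rewrite /r !mulrDl divfK ?gt_eqF //.
  have := ler_norm M; have := mulr_ge0 (normr_ge0 T) (ltW wp); lra.
move=> z Az unb.
have [y [czy Ry]] : exists y, connected_component A z y /\ R0 <= pnorm y.
  apply: contrapT => hn; apply: unb; exists R0 => y czy.
  rewrite leNgt; apply/negP => h; apply: hn.
  by exists y; split => //; exact: ltW.
have Ay : A y := connected_component_sub czy.
rewrite (same_connected_component czy).
by rewrite (same_connected_component (far y Ay Ry)).
Qed.

End PathConnection.

Definition rdist (R : realType) (z : plane R) (x : R) : R := pnorm (z - (x, 0)).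

Definition logpot (R : realType) (m : probability R R) (z : plane R) : R :=
  Rintegral m setT (fun x => ln (rdist z x)).

Lemma measurable_ln_rdist (R : realType) (z : plane R) :
  measurable_fun setT (fun x : R => ln (rdist z x)).
Proof.
rewrite /rdist /pnorm /cmod /=.
apply: measurableT_comp; first exact: measurable_ln.
apply: measurableT_comp.
  exact: continuous_measurable_fun (@sqrt_continuous R).
by apply: measurable_funD => //; apply: measurable_funX; apply: measurable_funB.
Qed.

(* The vector v = (Re u, - Im u), for which Re (z u) = <z, v>. *)
Definition dir (R : realType) (u : R[i]) : plane R :=
  (complex.Re u, - complex.Im u).

Lemma dir_neq0 (R : realType) (u : R[i]) : u != 0 -> dir u != 0.
Proof.
apply: contra => /eqP [h1 /eqP]; rewrite oppr_eq0 => /eqP h2.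
by apply/eqP; case: u h1 h2 => /= ? ? -> ->.
Qed.

Lemma ReS_decomp (R : realType) (m : probability R R) (u : R[i]) (z : plane R) :
  ReS m u z = dotp z (dir u) - logpot m z - ln (pnorm (dir u)).
Proof.
rewrite /ReS /logpot /rdist /dotp /pnorm /cmod /=; congr (_ - _ - ln _).
- by case: u => ? ?; rewrite /cpx /=; ring.
- by rewrite sqrrN.
Qed.

Section LogPotential.
Variables (R : realType) (m : probability R R) (K : R).
Hypotheses (K1 : 1 <= K) (concentrated : m (~` [set` `[-K, K]]) = 0%E).
Implicit Types (z w : plane R).

Let in_interval (x : R) : [set` `[-K, K]] x -> `|x| <= K.
Proof. by rewrite /= in_itv /= => h; rewrite ler_norml. Qed.

Lemma rdist_bounds z (x : R) : `|x| <= K ->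
  pnorm z - K <= rdist z x /\ rdist z x <= pnorm z + K.
Proof.
rewrite /rdist => hx.
have := pnormD (z - (x, 0)) (x, 0); have := pnormD z (- (x, 0)).
by rewrite subrK pnormN pnorm_real; lra.
Qed.

(* A crude bound on log y for y >= 1, enough for integrability. *)
Let ln_norm_le (y B : R) : 1 <= y -> y <= B -> `|ln y| <= B.
Proof.
move=> y1 yB; rewrite ger0_norm ?ln_ge0 //.
by have := ln_le_subr1 (lt_le_trans ltr01 y1); lra.
Qed.

Lemma logpot_bounds z : 2 * K <= pnorm z ->
  ln (pnorm z / 2) <= logpot m z <= ln (2 * pnorm z).
Proof.
move=> hz; apply: (Rintegral_bounds concentrated).
  exact: measurable_ln_rdist.
move=> x /in_interval/(rdist_bounds z)[d1 d2].
by have k1 := K1; apply/andP; split; rewrite ler_ln ?posrE; lra.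
Qed.

(* Estimate (2) of the introduction: L increases by at most 2 |w - z| / |z|
   from z to w, via the pointwise bound log |w - x| - log |z - x| <=
   |w - z| / |z - x| and |z - x| >= |z| / 2. *)
Lemma logpot_sub_le z w : 2 * K <= pnorm z -> 2 * K <= pnorm w ->
  logpot m w - logpot m z <= 2 * pnorm (w - z) / pnorm z.
Proof.
move=> hz hw; have k1 := K1.
apply: (Rintegral_sub_le (M1 := pnorm w + K) (M2 := pnorm z + K) concentrated);
  try exact: measurable_ln_rdist.
- move=> x /in_interval/(rdist_bounds w)[d1 d2].
  by apply: ln_norm_le; lra.
- move=> x /in_interval/(rdist_bounds z)[d1 d2].
  by apply: ln_norm_le; lra.
move=> x Ix; have [d1 _] := rdist_bounds z (in_interval Ix).
have dw : rdist w x <= pnorm (w - z) + rdist z x.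
  by rewrite /rdist -{1}(subrK z w) -addrA pnormD.
have zp : 0 < rdist z x by lra.
have wp : 0 < rdist w x.
  by have [] := rdist_bounds w (in_interval Ix); lra.
have z2 : 0 < pnorm z / 2 by lra.
have -> : 2 * pnorm (w - z) / pnorm z = pnorm (w - z) / (pnorm z / 2).
  by field; rewrite gt_eqF //; lra.
apply: le_trans (ln_sub_le zp wp) _.
apply: (@le_trans _ _ (pnorm (w - z) / rdist z x)).
  by rewrite ler_pM2r ?invr_gt0 //; lra.
by rewrite ler_wpM2l ?pnorm_ge0 // lef_pV2 ?posrE; lra.
Qed.

End LogPotential.

(* Section facts are copied into the
   local context (k1, ha, ...) before calling lra, which only sees the
   latter. *)
Section LevelSets.
Variables (R : realType) (m : probability R R) (K : R) (u : R[i]) (c : R).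
Hypotheses (K1 : 1 <= K) (supp_lt_K : forall x, supp m x -> `|x| < K)
  (concentrated : m (~` [set` `[-K, K]]) = 0%E) (u0 : u != 0).
Implicit Types (z p q : plane R) (r t : R).

Let v := dir u.
Let a := pnorm v.
Let v_neq0 : v != 0. Proof. exact: dir_neq0. Qed.
Let a_gt0 : 0 < a. Proof. exact: pnorm_gt0. Qed.

Definition superlevel := [set z | off_supp m z /\ c < ReS m u z].
Definition sublevel := [set z | off_supp m z /\ ReS m u z < c].

Lemma off_supp_far z : K < pnorm z -> off_supp m z.
Proof.
move=> hz [z2 /supp_lt_K hs]; suff e : pnorm z = `|z.1| by lra.
by rewrite -pnorm_real; case: z z2 {hz hs} => ? ? /= ->.
Qed.

Lemma dotp_ray r : dotp (r *: v) v = r * a ^+ 2.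
Proof. by rewrite dotpZl dotp_self. Qed.

Lemma dotp_le_norm z : `|dotp z v| <= a * pnorm z.
Proof. by rewrite mulrC norm_dotp_le. Qed.

Lemma ReS_far z : 2 * K <= pnorm z ->
  dotp z v - ln (2 * pnorm z) - ln a <= ReS m u z /\
  ReS m u z <= dotp z v - ln (pnorm z / 2) - ln a.
Proof.
move=> hz; have /andP[lo hi] := logpot_bounds K1 concentrated hz.
by rewrite ReS_decomp; split; lra.
Qed.

(* The two inequalities hidden in `|x|, in a form usable by lra. *)
Let abs_bounds (x : R) : - `|x| <= x /\ x <= `|x|.
Proof. by apply/andP; rewrite -ler_norml. Qed.

Let ln_double_le (y : R) : 0 < y -> ln (2 * y) <= a * y / 4 - ln (a / 8).
Proof.
move=> y0; have y2 : 0 < 2 * y by rewrite mulr_gt0.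
have a8 : 0 < a / 8 by rewrite divr_gt0.
have := ln_le_tangent y2 a8.
by rewrite (_ : a / 8 * (2 * y) = a * y / 4) //; field.
Qed.

(* Clog collects the logarithmic error terms.  Constants of the argument for
   the super-level set: the ray {r v | r >= Tp} lies in it, and its points
   beyond radius Rp are joined to that ray. *)
Let Clog : R := `|c| + `|ln a| + `|ln (a / 8)| + 1.
Let Tp : R := (2 * K * a + 4 * Clog) / a ^+ 2.
Let Rp : R := 2 * K + 2 / a + 2 * expR (`|c| + `|ln a|).

Let Clog_ge1 : 1 <= Clog.
Proof.
have := normr_ge0 c; have := normr_ge0 (ln a); have := normr_ge0 (ln (a / 8)).
by rewrite /Clog; lra.
Qed.

Lemma superlevel_of_dotp q : 2 * K * a <= dotp q v ->
  a * pnorm q + 4 * Clog <= 4 * dotp q v -> superlevel q.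
Proof.
move=> hd hn; have k1 := K1; have ha := a_gt0; have cl := Clog_ge1.
have hq : 2 * K <= pnorm q.
  rewrite -(ler_pM2l ha) mulrA [a * 2]mulrC.
  by have := dotp_le_norm q; have [] := abs_bounds (dotp q v); lra.
split; first by apply: off_supp_far; lra.
have [lo _] := ReS_far hq.
have tangent : ln (2 * pnorm q) <= a * pnorm q / 4 - ln (a / 8).
  by apply: ln_double_le; lra.
have [_ c1] := abs_bounds c; have [_ l1] := abs_bounds (ln a).
have [l2 _] := abs_bounds (ln (a / 8)).
rewrite /Clog in hn; lra.
Qed.

Lemma superlevel_ray r : Tp <= r -> superlevel (r *: v).
Proof.
move=> hr; have k1 := K1; have ha := a_gt0; have cl := Clog_ge1.
have a2 : 0 < a ^+ 2 by rewrite exprn_gt0.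
have hTp : Tp * a ^+ 2 = 2 * K * a + 4 * Clog by rewrite /Tp divfK ?gt_eqF.
have ra : Tp * a ^+ 2 <= r * a ^+ 2 by rewrite ler_pM2r.
have r0 : 0 <= r.
  suff : 0 <= Tp by lra.
  by rewrite /Tp divr_ge0 ?(ltW a2) // addr_ge0 ?mulr_ge0 //; lra.
have Ka : 0 <= K * a by rewrite mulr_ge0 //; lra.
apply: superlevel_of_dotp; rewrite dotp_ray; first lra.
rewrite pnormZ ger0_norm // (_ : a * (r * a) = r * a ^+ 2); first lra.
by rewrite expr2; ring.
Qed.

Let Rp_bounds z : Rp <= pnorm z ->
  [/\ 2 * K <= pnorm z, 2 <= a * pnorm z & `|c| + `|ln a| <= ln (pnorm z / 2)].
Proof.
move=> hR; have k1 := K1; have ha := a_gt0.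
have e := expR_gt0 (`|c| + `|ln a|).
have a2 : 0 <= 2 / a by rewrite divr_ge0 ?ltW.
rewrite /Rp in hR; split; first lra.
- by rewrite -ler_pdivrMl // mulrC; lra.
- by rewrite -[X in X <= _]expRK ler_ln ?posrE; lra.
Qed.

Lemma superlevel_far_dotp z : superlevel z -> Rp <= pnorm z -> 0 <= dotp z v.
Proof.
move=> [_ hc] /Rp_bounds[hK _ hln]; have [_ hi] := ReS_far hK.
have [c1 _] := abs_bounds c; have [l1 _] := abs_bounds (ln a); lra.
Qed.

(* Far from the origin, Re S_u increases in the direction v: the decrease of
   the log potential is dominated by the growth of <z, v>. *)
Lemma superlevel_push z t : superlevel z -> Rp <= pnorm z -> 0 <= t ->
  superlevel (z + t *: v).
Proof.
move=> Sz hR t0; have k1 := K1; have ha := a_gt0.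
have d0 := superlevel_far_dotp Sz hR; have [hK haz _] := Rp_bounds hR.
have hw := pnorm_advance d0 t0.
split; first by apply: off_supp_far; lra.
have hK' : 2 * K <= pnorm (z + t *: v) by lra.
have := logpot_sub_le K1 concentrated hK hK'.
rewrite (_ : z + t *: v - z = t *: v); last by rewrite addrC addKr.
rewrite pnormZ ger0_norm // -/a => hL.
have hq : 2 * (t * a) / pnorm z <= t * a ^+ 2.
  rewrite ler_pdivrMr; last lra.
  have : 0 <= t * a * (a * pnorm z - 2) by rewrite !mulr_ge0 ?subr_ge0 //; lra.
  rewrite expr2; lra.
case: Sz => _; rewrite !ReS_decomp dotpDl dotp_ray -/v -/a; lra.
Qed.

(* A far point z of the super-level set is joined to the ray {r v | r >= Tp}:
   push it along v to p = z + T v, then slide orthogonally to v onto the ray. *)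
Lemma superlevel_far_component z : superlevel z -> Rp <= pnorm z ->
  connected_component superlevel z (Tp *: v).
Proof.
move=> Sz hR; have k1 := K1; have ha := a_gt0; have cl := Clog_ge1.
have a2 : 0 < a ^+ 2 by rewrite exprn_gt0.
have Ka : 0 <= K * a by rewrite mulr_ge0 //; lra.
have az : 0 <= a * pnorm z by rewrite mulr_ge0 ?pnorm_ge0 ?ltW.
pose T := (a * pnorm z + 4 * Clog + 2 * K * a) / a ^+ 2.
have hT : T * a ^+ 2 = a * pnorm z + 4 * Clog + 2 * K * a.
  by rewrite divfK ?gt_eqF.
have T0 : 0 <= T by rewrite -(pmulr_lge0 _ a2) hT; lra.
pose p := z + T *: v.
have zp : connected_component superlevel z p.
  apply: segment_component => s /andP[s0 _].
  rewrite /p [z + T *: v - z]addrC addKr scalerA.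
  by apply: superlevel_push => //; exact: mulr_ge0.
have dp : T * a ^+ 2 <= dotp p v.
  by rewrite /p dotpDl dotp_ray; have := superlevel_far_dotp Sz hR; lra.
have np : a * pnorm p <= a * pnorm z + T * a ^+ 2.
  have : pnorm p <= pnorm z + T * a.
    by have := pnormD z (T *: v); rewrite pnormZ ger0_norm.
  by rewrite -(ler_pM2l ha) expr2; lra.
have pproj : connected_component superlevel p (proj v p).
  apply: segment_component => s hs; have [dq nq] := proj_segment p v_neq0 hs.
  apply: superlevel_of_dotp; rewrite dq; first lra.
  have : a * pnorm (p + s *: (proj v p - p)) <= a * pnorm p by rewrite ler_pM2l.
  lra.
have projray : connected_component superlevel (proj v p) (Tp *: v).
  apply: ray_component; [exact: superlevel_ray | | exact: lexx].
  rewrite /Tp ler_pM2r ?invr_gt0 //; lra.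
exact: connected_component_trans zp (connected_component_trans pproj projray).
Qed.

Lemma superlevel_unique : unique_unbounded_component superlevel.
Proof.
apply: (unique_unbounded_of_ray (R0 := Rp) v_neq0 superlevel_ray).
exact: superlevel_far_component.
Qed.

(* Constants of the argument for the sub-level set: the ray {- r v | r >= Tm}
   lies in it, and its points beyond radius Rm are joined to that ray. *)
Let Tm : R := (2 * K * a + Clog) / a ^+ 2.
Let Rm : R := 4 * K + 4 / a * Clog.

Lemma sublevel_of_dotp q : dotp q v <= - (2 * K * a + Clog) -> sublevel q.
Proof.
move=> hd; have k1 := K1; have ha := a_gt0; have cl := Clog_ge1.
have hq : 2 * K <= pnorm q.
  rewrite -(ler_pM2l ha) mulrA [a * 2]mulrC.
  by have := dotp_le_norm q; have [] := abs_bounds (dotp q v); lra.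
split; first by apply: off_supp_far; lra.
have [_ hi] := ReS_far hq.
have : 0 <= ln (pnorm q / 2) by apply: ln_ge0; lra.
have [c1 _] := abs_bounds c; have [l1 _] := abs_bounds (ln a).
have Ka : 0 <= K * a by rewrite mulr_ge0 //; lra.
have := normr_ge0 (ln (a / 8)); rewrite /Clog in hd; lra.
Qed.

Lemma sublevel_ray r : Tm <= r -> sublevel (r *: - v).
Proof.
move=> hr; have k1 := K1; have ha := a_gt0; have cl := Clog_ge1.
have a2 : 0 < a ^+ 2 by rewrite exprn_gt0.
have hTm : Tm * a ^+ 2 = 2 * K * a + Clog by rewrite /Tm divfK ?gt_eqF.
have ra : Tm * a ^+ 2 <= r * a ^+ 2 by rewrite ler_pM2r.
by apply: sublevel_of_dotp; rewrite scalerN -scaleNr dotp_ray; lra.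
Qed.

Let Rm_bounds z : Rm <= pnorm z -> 4 * K <= pnorm z /\ 4 * Clog <= a * pnorm z.
Proof.
move=> hR; have k1 := K1; have ha := a_gt0; have cl := Clog_ge1.
have h4 : 0 <= 4 / a * Clog by apply: mulr_ge0; [rewrite divr_ge0 // ltW | lra].
split; first by rewrite /Rm in hR; lra.
have : a * Rm <= a * pnorm z by rewrite ler_pM2l.
rewrite (_ : a * Rm = 4 * (K * a) + 4 * Clog); last first.
  by rewrite /Rm; field; rewrite gt_eqF.
have : 0 <= K * a by rewrite mulr_ge0 ?ltW //; lra.
lra.
Qed.

Lemma sublevel_far_dotp z : sublevel z -> Rm <= pnorm z ->
  2 * dotp z v <= a * pnorm z.
Proof.
move=> [_ hc] /Rm_bounds[hK haz]; have k1 := K1; have ha := a_gt0.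
have hK2 : 2 * K <= pnorm z by lra.
have [lo _] := ReS_far hK2.
have : ln (2 * pnorm z) <= a * pnorm z / 4 - ln (a / 8).
  by apply: ln_double_le; lra.
have [_ c1] := abs_bounds c; have [_ l1] := abs_bounds (ln a).
have [l2 _] := abs_bounds (ln (a / 8)).
rewrite /Clog in haz; lra.
Qed.

Lemma sublevel_push z t : sublevel z -> Rm <= pnorm z -> 0 <= t ->
  sublevel (z - t *: v).
Proof.
move=> Sz hR t0; have k1 := K1; have ha := a_gt0; have cl := Clog_ge1.
have [hK haz] := Rm_bounds hR.
have hw : pnorm z / 2 <= pnorm (z - t *: v).
  by apply: pnorm_retreat => //; rewrite -/a; exact: sublevel_far_dotp.
have hK' : 2 * K <= pnorm (z - t *: v) by lra.
split; first by apply: off_supp_far; lra.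
have hK2 : 2 * K <= pnorm z by lra.
have := logpot_sub_le K1 concentrated hK' hK2.
rewrite (_ : z - (z - t *: v) = t *: v); last by rewrite opprB addrC subrK.
rewrite pnormZ ger0_norm // -/a => hL.
have hq : 2 * (t * a) / pnorm (z - t *: v) <= t * a ^+ 2.
  rewrite ler_pdivrMr; last lra.
  have aw : 2 <= a * pnorm (z - t *: v).
    have : a * (pnorm z / 2) <= a * pnorm (z - t *: v) by rewrite ler_pM2l.
    lra.
  have : 0 <= t * a * (a * pnorm (z - t *: v) - 2).
    by apply: mulr_ge0; [exact: mulr_ge0 t0 (ltW ha) | rewrite subr_ge0].
  rewrite expr2; lra.
have dw : dotp (z - t *: v) v = dotp z v - t * a ^+ 2.
  by rewrite -scaleNr dotpDl dotp_ray mulNr.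
case: Sz => _; rewrite !ReS_decomp dw -/v -/a; lra.
Qed.

(* A far point z of the sub-level set is joined to the ray {- r v | r >= Tm}:
   push it along - v to p = z - T v, then slide orthogonally to v onto the
   ray. *)
Lemma sublevel_far_component z : sublevel z -> Rm <= pnorm z ->
  connected_component sublevel z (Tm *: - v).
Proof.
move=> Sz hR; have k1 := K1; have ha := a_gt0; have cl := Clog_ge1.
have a2 : 0 < a ^+ 2 by rewrite exprn_gt0.
have Ka : 0 <= K * a by rewrite mulr_ge0 //; lra.
have az : 0 <= a * pnorm z by rewrite mulr_ge0 ?pnorm_ge0 ?ltW.
pose T := (a * pnorm z / 2 + 2 * (2 * K * a + Clog)) / a ^+ 2.
have hT : T * a ^+ 2 = a * pnorm z / 2 + 2 * (2 * K * a + Clog).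
  by rewrite divfK ?gt_eqF.
have T0 : 0 <= T by rewrite -(pmulr_lge0 _ a2) hT; lra.
pose p := z - T *: v.
have zp : connected_component sublevel z p.
  apply: segment_component => s /andP[s0 _].
  rewrite /p addrAC subrr add0r scalerN scalerA.
  by apply: sublevel_push => //; exact: mulr_ge0.
have dp : dotp p v <= - (2 * (2 * K * a + Clog)).
  rewrite /p -scaleNr dotpDl dotp_ray; have := sublevel_far_dotp Sz hR; lra.
have pproj : connected_component sublevel p (proj v p).
  apply: segment_component => s hs; have [dq _] := proj_segment p v_neq0 hs.
  by apply: sublevel_of_dotp; rewrite dq; lra.
have projray : connected_component sublevel (proj v p) (Tm *: - v).
  have -> : proj v p = (- (dotp p v / a ^+ 2)) *: - v.
    by rewrite /proj scalerN scaleNr opprK.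
  apply: ray_component; [exact: sublevel_ray | | exact: lexx].
  rewrite /Tm -mulNr ler_pM2r ?invr_gt0 //; lra.
exact: connected_component_trans zp (connected_component_trans pproj projray).
Qed.

Lemma sublevel_unique : unique_unbounded_component sublevel.
Proof.
have nv : - v != 0 by rewrite oppr_eq0.
apply: (unique_unbounded_of_ray (R0 := Rm) nv sublevel_ray).
exact: sublevel_far_component.
Qed.

End LevelSets.

Unset Implicit Arguments.

(* Only u = G_m(z0) != 0 is used, not the position of z0. *)
Theorem proposition3p4 (R : realType) (m : probability R R)
  (z0 : plane R) (c : R) :
  compactly_supported m ->
  off_supp m z0 ->
  cauchy_transform m z0 != 0 ->
  unique_unbounded_component
    [set z | off_supp m z /\ c < ReS m (cauchy_transform m z0) z] /\
  unique_unbounded_component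
    [set z | off_supp m z /\ ReS m (cauchy_transform m z0) z < c].
Proof.
move=> supp_compact _ u0.
have [K [K1 supp_lt_K concentrated]] := compactly_supported_bound supp_compact.
split.
- exact: (superlevel_unique c K1 supp_lt_K concentrated u0).
- exact: (sublevel_unique c K1 supp_lt_K concentrated u0).
Qed.
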